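(* The structure $\varphi$ is Abelian, i.e. $[\varphi x,\varphi y]=[x,y]$ for all $x,y\in\mathfrak l$, if and only if $(L,\varphi,\xi,\eta,g)$ belongs to $\mathcal{F}_1\oplus\mathcal{F}_8\oplus\mathcal{F}_{10}$ with $2\lambda=\nu$, where $\lambda=F_{101}$ and $\nu=F_{011}$.
   Context: Let $L$ be a 3-dimensional real connected Lie group with Lie algebra $\mathfrak l$, and let $\{E_0,E_1,E_2\}$ be a basis of left-invariant vector fields, with $[E_i,E_j]=C_{ij}^kE_k$. Define the left-invariant almost contact structure $(\varphi,\xi,\eta)$ by $\varphi E_0=0$, $\varphi E_1=E_2$, $\varphi E_2=-E_1$, $\xi=E_0$, $\eta(E_0)=1$, $\eta(E_1)=\eta(E_2)=0$, and the left-invariant pseudo-Riemannian metric $g$ by $g(E_0,E_0)=g(E_1,E_1)=-g(E_2,E_2)=1$, $g(E_i,E_j)=0$ for $i\neq j$. Let $\nabla$ be the Levi-Civita connection of $g$, $F(x,y,z)=g((\nabla_x\varphi)y,z)$, and $F_{ijk}=F(E_i,E_j,E_k)$. The manifold belongs to $\mathcal{F}_1\oplus\mathcal{F}_8\oplus\mathcal{F}_{10}$ iff all $F_{ijk}$ vanish except possibly $F_{111}=F_{122}$, $F_{211}=F_{222}$ (the $\mathcal{F}_1$ part), $F_{101}=F_{110}=F_{202}=F_{220}=:\lambda$ (the $\mathcal{F}_8$ part) and $F_{011}=F_{022}=:\nu$ (the $\mathcal{F}_{10}$ part). *)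

From Stdlib Require Import Reals.
Open Scope R_scope.

Inductive idx : Type := I0 | I1 | I2.

(* Elements of l are coordinate vectors w.r.t. {E_0,E_1,E_2}. *)
Definition vec := idx -> R.

Definition sum3 (f : idx -> R) : R := f I0 + f I1 + f I2.

Definition E (i : idx) : vec := fun k =>
  match i, k with
  | I0, I0 | I1, I1 | I2, I2 => 1
  | _, _ => 0
  end.

(* Structure constants: [E_i, E_j] = sum_k C i j k E_k. *)
Definition structure_consts := idx -> idx -> idx -> R.

Definition is_lie_algebra (C : structure_consts) : Prop :=
  (forall i j k, C i j k = - C j i k) /\
  (forall i j k m,
     sum3 (fun l => C i j l * C l k m + C j k l * C l i m + C k i l * C l j m) = 0).

Definition brk (C : structure_consts) (x y : vec) : vec := fun k =>
  sum3 (fun i => sum3 (fun j => x i * y j * C i j k)).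

Definition eps (i : idx) : R := match i with I0 => 1 | I1 => 1 | I2 => -1 end.

Definition g (x y : vec) : R := sum3 (fun i => eps i * x i * y i).

Definition phi (x : vec) : vec := fun k =>
  match k with I0 => 0 | I1 => - x I2 | I2 => x I1 end.

(* Levi-Civita connection on left-invariant vector fields, given by the
   Koszul formula  2 g(nabla_x y, z) = g([x,y],z) - g([y,z],x) + g([z,x],y),
   solved using the orthonormal basis (g(E_k,E_k) = eps k, eps k^2 = 1). *)
Definition nabla (C : structure_consts) (x y : vec) : vec := fun k =>
  eps k * (/2) * (g (brk C x y) (E k) - g (brk C y (E k)) x + g (brk C (E k) x) y).

(* F(x,y,z) = g((nabla_x phi) y, z) *)
Definition F (C : structure_consts) (x y z : vec) : R :=
  g (fun k => nabla C x (phi y) k - phi (nabla C x y) k) z.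

Definition Fijk (C : structure_consts) (i j k : idx) : R := F C (E i) (E j) (E k).

Definition allowed (i j k : idx) : bool :=
  match i, j, k with
  | I1, I1, I1 | I1, I2, I2 | I2, I1, I1 | I2, I2, I2   (* F_1 *)
  | I1, I0, I1 | I1, I1, I0 | I2, I0, I2 | I2, I2, I0   (* F_8 *)
  | I0, I1, I1 | I0, I2, I2 => true                     (* F_10 *)
  | _, _, _ => false
  end.

Definition in_F1_F8_F10 (C : structure_consts) : Prop :=
  (forall i j k, allowed i j k = false -> Fijk C i j k = 0) /\
  Fijk C I1 I1 I1 = Fijk C I1 I2 I2 /\
  Fijk C I2 I1 I1 = Fijk C I2 I2 I2 /\
  Fijk C I1 I0 I1 = Fijk C I1 I1 I0 /\
  Fijk C I1 I1 I0 = Fijk C I2 I0 I2 /\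
  Fijk C I2 I0 I2 = Fijk C I2 I2 I0 /\
  Fijk C I0 I1 I1 = Fijk C I0 I2 I2.

Definition phi_abelian (C : structure_consts) : Prop :=
  forall x y : vec, forall k, brk C (phi x) (phi y) k = brk C x y k.

(* The endomorphism phi kills E0 and rotates span(E1, E2) with determinant 1, so
   it preserves the bracket on that plane automatically: phi is Abelian exactly
   when xi = E0 is central, i.e. when the six structure constants C_{0jk}
   (j = 1, 2) vanish.  The Koszul formula expresses every F_{ijk} linearly in the
   structure constants; the components of F outside the pattern of
   F_1 + F_8 + F_10 are (up to sign) C_{010}, C_{020}, C_{011}, C_{022},
   F_{101} = F_{202} amounts to C_{012} = C_{021}, and 2 F_{101} - F_{011} =
   -2 C_{012}. *)

From Stdlib Require Import Reals Lra.
Open Scope R_scope.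

(* Table of F_{ijk}; the wildcard covers the nine entries that vanish for every
   antisymmetric bracket. *)
Definition Fijk_of_consts (C : structure_consts) (i j k : idx) : R :=
  match i, j, k with
  | I0, I0, I1 | I0, I1, I0 => C I0 I2 I0
  | I0, I0, I2 | I0, I2, I0 => - C I0 I1 I0
  | I0, I1, I1 | I0, I2, I2 => C I0 I1 I2 + C I0 I2 I1 + C I1 I2 I0
  | I1, I0, I1 | I1, I1, I0 => (- C I0 I1 I2 + C I0 I2 I1 + C I1 I2 I0) / 2
  | I2, I0, I2 | I2, I2, I0 => (C I0 I1 I2 - C I0 I2 I1 + C I1 I2 I0) / 2
  | I1, I0, I2 | I1, I2, I0 => - C I0 I1 I1
  | I2, I0, I1 | I2, I1, I0 => - C I0 I2 I2
  | I1, I1, I1 | I1, I2, I2 => 2 * C I1 I2 I1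
  | I2, I1, I1 | I2, I2, I2 => - 2 * C I1 I2 I2
  | _, _, _ => 0
  end.

Definition xi_central (C : structure_consts) : Prop :=
  forall k, C I0 I1 k = 0 /\ C I0 I2 k = 0.

Section AntisymmetricBracket.

Variable C : structure_consts.
Hypothesis C_antisym : forall i j k, C i j k = - C j i k.

Lemma C_diag i k : C i i k = 0.
Proof. pose proof (C_antisym i i k); lra. Qed.

Ltac normalize_consts :=
  rewrite ?(C_antisym I1 I0), ?(C_antisym I2 I0), ?(C_antisym I2 I1), ?C_diag.

Lemma brk_expand x y k :
  brk C x y k =
    (x I0 * y I1 - x I1 * y I0) * C I0 I1 k
  + (x I0 * y I2 - x I2 * y I0) * C I0 I2 k
  + (x I1 * y I2 - x I2 * y I1) * C I1 I2 k.
Proof. unfold brk, sum3; normalize_consts; ring. Qed.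

Lemma brk_phi x y k :
  brk C (phi x) (phi y) k = (x I1 * y I2 - x I2 * y I1) * C I1 I2 k.
Proof. rewrite brk_expand; simpl; ring. Qed.

Lemma phi_abelian_iff_xi_central : phi_abelian C <-> xi_central C.
Proof.
  unfold phi_abelian; split.
  - intros Hab k.
    pose proof (Hab (E I0) (E I1) k) as H01.
    pose proof (Hab (E I0) (E I2) k) as H02.
    rewrite brk_phi, brk_expand in H01, H02; simpl in H01, H02.
    split; lra.
  - intros Hxi x y k.
    destruct (Hxi k) as [H01 H02].
    rewrite brk_phi, brk_expand, H01, H02; ring.
Qed.

Lemma Fijk_formula i j k : Fijk C i j k = Fijk_of_consts C i j k.
Proof.
  destruct i, j, k;
    unfold Fijk, F, nabla, g, brk, phi, E, eps, sum3; simpl;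
    normalize_consts; lra.
Qed.

Lemma in_F1_F8_F10_iff :
  in_F1_F8_F10 C <->
  C I0 I1 I0 = 0 /\ C I0 I2 I0 = 0 /\ C I0 I1 I1 = 0 /\ C I0 I2 I2 = 0 /\
  C I0 I1 I2 = C I0 I2 I1.
Proof.
  unfold in_F1_F8_F10; rewrite !Fijk_formula; simpl; split.
  - intros (Hzero & _ & _ & _ & H110_202 & _ & _).
    pose proof (Hzero I0 I0 I1 eq_refl) as H001.
    pose proof (Hzero I0 I0 I2 eq_refl) as H002.
    pose proof (Hzero I1 I0 I2 eq_refl) as H102.
    pose proof (Hzero I2 I0 I1 eq_refl) as H201.
    rewrite Fijk_formula in H001, H002, H102, H201; simpl in *.
    repeat split; lra.
  - intros (H010 & H020 & H011 & H022 & H012).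
    repeat split; try lra.
    intros i j k Hk; rewrite Fijk_formula.
    destruct i, j, k; simpl in *; lra || discriminate.
Qed.

Lemma two_lambda_eq_nu_iff :
  2 * Fijk C I1 I0 I1 = Fijk C I0 I1 I1 <-> C I0 I1 I2 = 0.
Proof. rewrite !Fijk_formula; simpl; split; intro; lra. Qed.

End AntisymmetricBracket.

Theorem theorem2p5 (C : structure_consts) (HC : is_lie_algebra C) :
  phi_abelian C <->
  (in_F1_F8_F10 C /\ 2 * Fijk C I1 I0 I1 = Fijk C I0 I1 I1).
Proof.
  destruct HC as [C_antisym _].
  rewrite (phi_abelian_iff_xi_central C C_antisym),
    (in_F1_F8_F10_iff C C_antisym), (two_lambda_eq_nu_iff C C_antisym).
  unfold xi_central; split.
  - intros Hxi.
    destruct (Hxi I0), (Hxi I1), (Hxi I2).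
    repeat split; lra.
  - intros [(H010 & H020 & H011 & H022 & H012) H012_zero] k.
    destruct k; split; lra.
Qed.
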